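(* The set $T$ is a reduced Gröbner basis of $I_\phi=I_{\phi'}\cap\mathbb{K}[x_{i|A}:i\notin A]$ with respect to the restriction of the graded reverse lexicographic order $<$ to $\mathbb{K}[x_{i|A}:i\notin A]$.
   Context: $\phi:\mathbb{K}[x_{i|A}: i\in[n],A\subseteq[n]\setminus\{i\}]\to\mathbb{K}[y_i,\beta_j]$, $x_{i|A}\mapsto y_i\prod_{j\in A}\beta_j$; $\phi'$ is its extension to all $x_{i|A}$, $A\subseteq[n]$; $I_\phi=\ker\phi$, $I_{\phi'}=\ker\phi'$. $L$ is the lattice on the variables $x_{i|A}$ with $x_{i|A}\le x_{j|B}$ iff $i\le j$ and $A\subseteq B$. $G_L=\{x_{i|A}x_{j|B}-x_{\min(i,j)|A\cap B}x_{\max(i,j)|A\cup B}: x_{i|A},x_{j|B}\text{ incomparable}\}$. $T=T_1\cup T_2$, where $T_1$ is the set of elements of $G_L$ all of whose variables lie in $\mathbb{K}[x_{i|A}:i\notin A]$, and $T_2=\{x_{i|A}x_{j|B}-x_{i|(A\cap B)\cup\{j\}}x_{j|(A\setminus\{j\})\cup B}: i<j,\ i\notin A,\ j\notin B,\ j\in A,\ x_{i|A},x_{j|B}\text{ incomparable in }L\}$. Variables are totally ordered by $x_{i|A}\prec x_{j|B}$ iff $i<j$, or $i=j$ and $|A|<|B|$, or $i=j$, $|A|=|B|$ and $\min(A\setminus B)<\min(B\setminus A)$; indexing them increasingly, $x^u<x^v$ iff $\deg x^u<\deg x^v$, or degrees are equal and the rightmost nonzero entry of $v-u$ is negative. *)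

From mathcomp Require Import all_boot all_order all_algebra.
From mathcomp Require Import mpoly.
Set Implicit Arguments. Unset Strict Implicit. Unset Printing Implicit Defensive.
Import GRing.Theory.
Local Open Scope ring_scope.

(* Index set [n] is modelled by 'I_n = {0,...,n-1} (order preserved).
   A pair (i, A) : 'I_n * {set 'I_n} indexes the variable x_{i|A}. *)
Definition Idx (n : nat) : finType := ('I_n * {set 'I_n})%type.

Definition nvar (n : nat) : nat := #|Idx n|.

Definition Ring (K : fieldType) (n : nat) := {mpoly K[nvar n]}.

Definition xv (K : fieldType) (n : nat) (w : Idx n) : Ring K n :=
  'X_(enum_rank w).

(* x_{i|A} is a variable of the subring K[x_{i|A} : i notin A]. *)
Definition valid_idx (n : nat) (w : Idx n) : bool := w.1 \notin w.2.

Definition in_subring (K : fieldType) (n : nat) (p : Ring K n) : Prop :=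
  forall m : 'X_{1..nvar n}, m \in msupp p ->
    forall k : 'I_(nvar n), ~~ valid_idx (enum_val k) -> m k = 0%N.

(* Target ring K[y_i, beta_j : i, j in [n]]: y_i = 'X_(lshift n i),
   beta_j = 'X_(rshift n j). *)
Definition phi_img (K : fieldType) (n : nat) (w : Idx n) : {mpoly K[n + n]} :=
  'X_(lshift n w.1) * \prod_(j in w.2) 'X_(rshift n j).

Definition phi' (K : fieldType) (n : nat) (p : Ring K n) : {mpoly K[n + n]} :=
  comp_mpoly [tuple phi_img K (enum_val k) | k < nvar n] p.

Definition I_phi' (K : fieldType) (n : nat) (p : Ring K n) : Prop :=
  phi' p = 0.

Definition I_phi (K : fieldType) (n : nat) (p : Ring K n) : Prop :=
  in_subring p /\ I_phi' p.

(* x_{i|A} < x_{j|B} iff i<j, or i=j and |A|<|B|, or i=j, |A|=|B| and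
   min(A\B) < min(B\A).  (For A<>B with |A|=|B| both differences are
   nonempty.) *)
Definition minset (n : nat) (S : {set 'I_n}) : nat :=
  \big[minn/n]_(j in S) (j : nat).

Definition var_lt (n : nat) (a b : Idx n) : bool :=
  ((a.1 : nat) < b.1)%N
  || ((a.1 == b.1) && (#|a.2| < #|b.2|)%N)
  || [&& a.1 == b.1, #|a.2| == #|b.2|, a.2 != b.2 &
        (minset (a.2 :\: b.2) < minset (b.2 :\: a.2))%N].

(* Graded reverse lexicographic order: x^u < x^v iff deg u < deg v, or the
   degrees are equal and, at the largest variable (w.r.t. var_lt) where u and
   v differ, v has the smaller exponent (the "rightmost nonzero entry of v-u
   is negative" when variables are indexed increasingly). *)
Definition grevlex_lt (n : nat) (u v : 'X_{1..nvar n}) : bool :=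
  (mdeg u < mdeg v)%N
  || ((mdeg u == mdeg v) &&
      [exists k : 'I_(nvar n),
         (v k < u k)%N &&
         [forall l : 'I_(nvar n),
            var_lt (enum_val k) (enum_val l) ==> (u l == v l)]]).

Definition is_lead (K : fieldType) (n : nat) (p : Ring K n)
    (m : 'X_{1..nvar n}) : Prop :=
  m \in msupp p /\
  forall m' : 'X_{1..nvar n}, m' \in msupp p -> m' != m -> grevlex_lt m' m.

Definition groebner_basis (K : fieldType) (n : nat)
    (G I : Ring K n -> Prop) : Prop :=
  (forall g, G g -> I g) /\
  (forall f, I f -> f != 0 ->
     exists g, [/\ G g, g != 0 &
       (exists mg mf, [/\ is_lead g mg, is_lead f mf & (mg <= mf)%MM])]).

Definition reduced_groebner_basis (K : fieldType) (n : nat)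
    (G I : Ring K n -> Prop) : Prop :=
  groebner_basis G I /\
  (forall g, G g -> g != 0 /\ exists mg, is_lead g mg /\ g@_mg = 1) /\
  (forall g g', G g -> G g' -> g' <> g ->
     forall m mg', m \in msupp g -> is_lead g' mg' -> ~ (mg' <= m)%MM).

Definition leL (n : nat) (a b : Idx n) : bool :=
  ((a.1 : nat) <= b.1)%N && (a.2 \subset b.2).

Definition incomparable (n : nat) (a b : Idx n) : bool :=
  ~~ leL a b && ~~ leL b a.

Definition ord_min (n : nat) (i j : 'I_n) : 'I_n :=
  if ((i : nat) <= j)%N then i else j.
Definition ord_max (n : nat) (i j : 'I_n) : 'I_n :=
  if ((i : nat) <= j)%N then j else i.

Definition meetL (n : nat) (a b : Idx n) : Idx n :=
  (ord_min a.1 b.1, a.2 :&: b.2).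
Definition joinL (n : nat) (a b : Idx n) : Idx n :=
  (ord_max a.1 b.1, a.2 :|: b.2).

Definition GL_binom (K : fieldType) (n : nat) (a b : Idx n) : Ring K n :=
  xv K a * xv K b - xv K (meetL a b) * xv K (joinL a b).

Definition T1 (K : fieldType) (n : nat) (p : Ring K n) : Prop :=
  exists a b : Idx n,
    [/\ incomparable a b,
        [&& valid_idx a, valid_idx b, valid_idx (meetL a b)
          & valid_idx (joinL a b)] &
        p = GL_binom K a b].

Definition T2 (K : fieldType) (n : nat) (p : Ring K n) : Prop :=
  exists (i j : 'I_n) (A B : {set 'I_n}),
    [/\ [&& ((i : nat) < j)%N, i \notin A, j \notin B & j \in A],
        incomparable (i, A) (j, B) &
        p = xv K (i, A) * xv K (j, B)
            - xv K (i, (A :&: B) :|: [set j]) * xv K (j, (A :\ j) :|: B)].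

Definition T (K : fieldType) (n : nat) (p : Ring K n) : Prop :=
  (T1 p \/ T2 p) /\ p != 0.

From Pilot Require Import Defs.
From mathcomp Require Import all_boot all_order all_algebra.
From mathcomp Require Import mpoly.
Set Implicit Arguments. Unset Strict Implicit. Unset Printing Implicit Defensive.

(* Every element of [T] is a binomial [x_a x_b - x_c x_d] whose variable [x_d]
   is the largest of the four, whose two monomials have the same image under
   [phi], and where [x_a x_b] is a non-standard pair and [x_c x_d] a standard
   one: this gives [T] in [I_phi], monic leading terms and reducedness.
   Call a monomial standard when all pairs of its variables are.  A standard
   monomial [m] of [K[x_{i|A} : i notin A]] is the grevlex-smallest monomial of
   its [phi]-fiber: if [i] is the largest index with [y_i] dividing [phi m] and
   [S] is the rest of the [beta]-support, then [x_{i|S}] dominates every variable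
   occurring in the fiber and divides [m], so a competitor either lacks it and
   loses at that variable, or [x_{i|S}] cancels from both and we induct on the
   degree.  Hence the leading monomial of a nonzero [f] in [I_phi] is not
   standard (its coefficient would survive in [phi f]); it is divisible by a
   non-standard pair, which is the leading term of an element of [T]. *)

Section VariableOrder.
Variable n : nat.
Implicit Types (A B C S : {set 'I_n}) (a b c : Idx n).

(* The empty set has [minset] equal to [n], above every element of ['I_n]. *)
Lemma minset_spec S :
  Defs.minset S = n \/ exists2 j : 'I_n, j \in S & Defs.minset S = j.
Proof.
apply: (big_ind (fun v => v = n \/ exists2 j : 'I_n, j \in S & v = j)).
- by left.
- by move=> x y Hx Hy; rewrite /minn; case: ifP.
- by move=> j Sj; right; exists j.
Qed.

Lemma minset_le S (j : 'I_n) : j \in S -> Defs.minset S <= j.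
Proof.
move=> Sj; rewrite /Defs.minset; move: (mem_index_enum j).
elim: (index_enum _) => [|x s IH] //; rewrite inE big_cons.
case/orP => [/eqP <-|/IH le_s_j]; first by rewrite Sj geq_minl.
by case: ifP => // _; apply: leq_trans (geq_minr _ _) le_s_j.
Qed.

Lemma minset_le_n S : Defs.minset S <= n.
Proof. by case: (minset_spec S) => [->|[j _ ->]] //; apply: ltnW. Qed.

Lemma minset_mem S : S != set0 -> exists2 j : 'I_n, j \in S & Defs.minset S = j.
Proof.
case/set0Pn=> x Sx; case: (minset_spec S) => [minE|//].
by have := minset_le Sx; rewrite minE leqNgt ltn_ord.
Qed.

Definition setlex_lt A B := exists r : 'I_n,
  [/\ r \in A, r \notin B & forall y : 'I_n, y < r -> (y \in A) = (y \in B)].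

Lemma minset_setDP A B :
  Defs.minset (A :\: B) < Defs.minset (B :\: A) <-> setlex_lt A B.
Proof.
split.
- case: (minset_spec (A :\: B)) => [->|[r]]; first by rewrite ltnNge minset_le_n.
  rewrite inE => /andP [rB rA] minE; rewrite minE => ltrBA.
  exists r; split => // y ltyr.
  apply/idP/idP => [yA|yB]; apply: contraTT ltyr => yN; rewrite -leqNgt -minE.
  + by apply: minset_le; rewrite inE yN yA.
  + by rewrite minE; apply: ltnW (leq_trans ltrBA (minset_le _)); rewrite inE yN yB.
- case=> r [rA rB eqAB]; apply: (@leq_ltn_trans r).
    by apply: minset_le; rewrite inE rA rB.
  case: (minset_spec (B :\: A)) => [->|[y]]; first exact: ltn_ord.
  rewrite inE => /andP [yA yB] ->; rewrite ltnNge leq_eqVlt.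
  apply/negP => /orP [/eqP/val_inj ry|ltyr]; first by rewrite -ry yB in rB.
  by rewrite eqAB // yB in yA.
Qed.

Lemma setlex_lt_trans A B C : setlex_lt A B -> setlex_lt B C -> setlex_lt A C.
Proof.
case=> p [pA pB eqAB] [q [qB qC eqBC]].
case: (ltngtP p q) => [ltpq|ltqp|/val_inj epq].
- exists p; split => //; first by rewrite -eqBC.
  by move=> y ltyp; rewrite eqAB // eqBC // (ltn_trans ltyp ltpq).
- exists q; split => //; first by rewrite eqAB.
  by move=> y ltyq; rewrite eqAB ?eqBC // (ltn_trans ltyq ltqp).
- by rewrite epq qB in pB.
Qed.

Lemma setlex_lt_neq A B : setlex_lt A B -> A != B.
Proof. by case=> r [rA rB _]; apply: contraNneq rB => <-. Qed.

Lemma setlex_lt_total A B :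
  A != B -> #|A| = #|B| -> setlex_lt A B \/ setlex_lt B A.
Proof.
move=> neqAB cardAB.
have setD_neq0 C D : C != D -> #|C| = #|D| -> C :\: D != set0.
  move=> neqCD cardCD; rewrite setD_eq0; apply: contra neqCD => sCD.
  by rewrite eqEcard sCD cardCD leqnn.
have [p pAB minAB] := minset_mem (setD_neq0 _ _ neqAB cardAB).
have neqBA : B != A by rewrite eq_sym.
have [q qBA minBA] := minset_mem (setD_neq0 _ _ neqBA (esym cardAB)).
case: (ltngtP p q) => [ltpq|ltqp|/val_inj epq].
- by left; apply/minset_setDP; rewrite minAB minBA.
- by right; apply/minset_setDP; rewrite minAB minBA.
- by move: pAB qBA; rewrite epq !inE => /andP [_ ->] /andP [].
Qed.

Lemma var_lt_irr a : var_lt a a = false.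
Proof. by rewrite /var_lt !ltnn !eqxx. Qed.

Lemma var_ltP a b : var_lt a b <->
  [\/ a.1 < b.1, a.1 = b.1 /\ #|a.2| < #|b.2|
     | [/\ a.1 = b.1, #|a.2| = #|b.2| & setlex_lt a.2 b.2]].
Proof.
split.
- case/orP => [/orP [lt|/andP [/eqP e1 lt]]|/and4P [/eqP e1 /eqP e2 _ /minset_setDP]].
  + by constructor 1.
  + by constructor 2.
  + by constructor 3.
- rewrite /var_lt; case=> [->//|[-> ->]|[-> -> lexAB]]; first by rewrite eqxx orbT.
  by rewrite !eqxx (setlex_lt_neq lexAB) ((minset_setDP _ _).2 lexAB) !orbT.
Qed.

Lemma var_lt_trans a b c : var_lt a b -> var_lt b c -> var_lt a c.
Proof.
move=> /var_ltP Hab /var_ltP Hbc; apply/var_ltP.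
case: Hab => [lt1|[e1 lt1]|[e1 f1 lex1]];
case: Hbc => [lt2|[e2 lt2]|[e2 f2 lex2]].
all: try by constructor 1; rewrite ?e1 -?e2 //; apply: ltn_trans lt1 lt2.
- by constructor 2; rewrite e1 e2; split; last apply: ltn_trans lt1 lt2.
- by constructor 2; rewrite e1 e2 -f2.
- by constructor 2; rewrite e1 e2 f1.
- by constructor 3; rewrite e1 e2 f1 f2; split; last apply: setlex_lt_trans lex1 lex2.
Qed.

Lemma var_lt_asym a b : var_lt a b -> var_lt b a -> False.
Proof. by move=> ab /(var_lt_trans ab); rewrite var_lt_irr. Qed.

Lemma var_lt_total a b : a != b -> var_lt a b \/ var_lt b a.
Proof.
case: a b => [i A] [j B] /= neq; rewrite /var_lt /=.
case: (ltngtP i j) => [_|_|/val_inj eij]; [by left|by right|subst j].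
rewrite eqxx /=; case: (ltngtP #|A| #|B|) => [_|_|cardAB]; [by left|by right|].
have neqAB : A != B by apply: contraNneq neq => ->.
rewrite neqAB eq_sym neqAB.
by case: (setlex_lt_total neqAB cardAB) => /minset_setDP lt; [left|right].
Qed.

End VariableOrder.

Lemma seq_max_exists (T : eqType) (lt : rel T) :
  (forall x y z, lt x y -> lt y z -> lt x z) ->
  (forall x y, x != y -> lt x y \/ lt y x) ->
  forall s : seq T, s != [::] ->
  exists2 x, x \in s & forall y, y \in s -> y != x -> lt y x.
Proof.
move=> lt_trans lt_total; elim=> [//|x s IH] _.
case: (eqVneq s [::]) => [->|/IH [z zs zmax]].
  by exists x => [|y]; rewrite !inE // => /eqP ->; rewrite eqxx.
case: (eqVneq x z) => [->|neq_xz].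
  by exists z => [|y]; rewrite !inE ?zs ?orbT // => /predU1P [->|/zmax]; rewrite ?eqxx.
case: (lt_total _ _ neq_xz) => [ltxz|ltzx].
  by exists z => [|y]; rewrite !inE ?zs ?orbT // => /predU1P [->|/zmax].
exists x => [|y]; first by rewrite inE eqxx.
rewrite inE => /predU1P [->|ys]; first by rewrite eqxx.
by case: (eqVneq y z) => [-> //|/(zmax _ ys) ltyz _]; apply: lt_trans ltyz ltzx.
Qed.

Section Grevlex.
Variable n : nat.
Local Notation N := (nvar n).
Implicit Types (u v w : 'X_{1..N}) (k l : 'I_N).
Local Notation vlt k l := (var_lt (enum_val k) (enum_val l)).

Lemma vlt_total k l : k != l -> vlt k l \/ vlt l k.
Proof. by move=> neq; apply: var_lt_total; apply: contra neq => /eqP/enum_val_inj ->. Qed.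

Lemma grevlexP u v : grevlex_lt u v <->
  mdeg u < mdeg v \/
  mdeg u = mdeg v /\ exists k, v k < u k /\ forall l, vlt k l -> u l = v l.
Proof.
split.
- case/orP => [|/andP [/eqP e /existsP [k /andP [lt /forallP above]]]]; first by left.
  by right; split => //; exists k; split => // l kl; apply/eqP; move/implyP: (above l); apply.
- case=> [lt|[e [k [lt above]]]]; apply/orP; [by left|right].
  rewrite e eqxx; apply/existsP; exists k; rewrite lt.
  by apply/forallP => l; apply/implyP => /above ->.
Qed.

Lemma grevlex_asym u v : grevlex_lt u v -> grevlex_lt v u -> False.
Proof.
move=> /grevlexP [lt1|[e1 [k1 [lt1 above1]]]] /grevlexP [lt2|[e2 [k2 [lt2 above2]]]].
- by have := ltn_trans lt1 lt2; rewrite ltnn.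
- by rewrite e2 ltnn in lt1.
- by rewrite e1 ltnn in lt2.
case: (eqVneq k1 k2) lt2 above2 => [<-|/vlt_total [k12|k21]] lt2 above2.
- by have := ltn_trans lt1 lt2; rewrite ltnn.
- by rewrite above1 // ltnn in lt2.
- by rewrite above2 // ltnn in lt1.
Qed.

Lemma grevlex_trans u v w : grevlex_lt u v -> grevlex_lt v w -> grevlex_lt u w.
Proof.
move=> /grevlexP [lt1|[e1 [k1 [lt1 above1]]]] /grevlexP [lt2|[e2 [k2 [lt2 above2]]]];
  apply/grevlexP.
- by left; apply: ltn_trans lt1 lt2.
- by left; rewrite -e2.
- by left; rewrite e1.
right; split; first by rewrite e1.
case: (eqVneq k1 k2) lt2 above2 => [<-|/vlt_total [k12|k21]] lt2 above2.
- exists k1; split; first exact: ltn_trans lt2 lt1.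
  by move=> l kl; rewrite above1 // above2.
- exists k2; split; first by rewrite above1.
  by move=> l kl; rewrite above1 ?above2 //; apply: var_lt_trans k12 kl.
- exists k1; split; first by rewrite -above2.
  by move=> l kl; rewrite above1 ?above2 //; apply: var_lt_trans k21 kl.
Qed.

Lemma grevlex_total u v : u != v -> grevlex_lt u v \/ grevlex_lt v u.
Proof.
move=> neq; case: (ltngtP (mdeg u) (mdeg v)) => [lt|lt|e].
- by left; apply/grevlexP; left.
- by right; apply/grevlexP; left.
pose diff := [seq k <- enum 'I_N | u k != v k].
have : diff != [::].
  apply: contra neq => /eqP diff0; apply/eqP/mnmP => k; apply/eqP/negPn.
  by apply: contraFN (in_nil k); rewrite -diff0 mem_filter mem_enum andbT.
have vlt_trans k1 k2 k3 : vlt k1 k2 -> vlt k2 k3 -> vlt k1 k3 := @var_lt_trans _ _ _ _.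
case/(seq_max_exists vlt_trans vlt_total) => k; rewrite mem_filter => /andP [neq_k _] kmax.
have above l : vlt k l -> u l = v l.
  move=> kl; apply/eqP; apply: contraTT kl => neq_l.
  case: (eqVneq l k) => [->|lk]; first by rewrite var_lt_irr.
  by apply/negP => /(var_lt_asym (kmax l _ lk)); apply; rewrite mem_filter neq_l mem_enum.
case: (ltngtP (u k) (v k)) => [lt|lt|e']; last by rewrite e' eqxx in neq_k.
- by right; apply/grevlexP; right; split => //; exists k; split => // l /above.
- by left; apply/grevlexP; right; split => //; exists k.
Qed.

Lemma grevlex_lt_add2r u v w : grevlex_lt u v -> grevlex_lt (u + w)%MM (v + w)%MM.
Proof.
move=> /grevlexP [lt|[e [k [lt above]]]]; apply/grevlexP; rewrite !mdegD.
  by left; rewrite ltn_add2r.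
right; split; first by rewrite e.
by exists k; rewrite !mnmDE ltn_add2r; split => // l /above; rewrite !mnmDE => ->.
Qed.
End Grevlex.

Lemma lepm_mdeg_eq k (m1 m2 : 'X_{1..k}) :
  (m1 <= m2)%MM -> mdeg m1 = mdeg m2 -> m1 = m2.
Proof.
move=> le12 e12; rewrite -(submK le12).
suff /eqP -> : (m2 - m1)%MM == 0%MM by rewrite add0m.
by rewrite -mdeg_eq0 -(eqn_add2r (mdeg m1)) -mdegD submK // e12.
Qed.

Lemma sum_mask_gt0P (I : finType) (b : I -> bool) (u : I -> nat) :
  reflect (exists k, b k && (0 < u k)%N) (0 < \sum_k b k * u k)%N.
Proof.
rewrite lt0n sum_nat_eq0; apply: (iffP forallPn) => [[k]|[k /andP [bk uk]]].
  rewrite /= muln_eq0 negb_or => /andP [bk]; rewrite -lt0n => uk.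
  by exists k; rewrite uk andbT; case: (b k) bk.
by exists k; rewrite /= bk mul1n -lt0n.
Qed.

Lemma eq_mnm_shift n (m1 m2 : 'X_{1..n + n}) :
  (forall i, m1 (lshift n i) = m2 (lshift n i)) ->
  (forall j, m1 (rshift n j) = m2 (rshift n j)) -> m1 = m2.
Proof.
move=> eqL eqR; apply/mnmP => x; case: (splitP x) => [i|j] e.
  by rewrite (_ : x = lshift n i) ?eqL //; apply/val_inj.
by rewrite (_ : x = rshift n j) ?eqR //; apply/val_inj.
Qed.

Import GRing.Theory.
Local Open Scope ring_scope.

Section Binomials.
Variables (K : fieldType) (n : nat).
Local Notation N := (nvar n).
Implicit Types (a b c d : Idx n) (m : 'X_{1..N}) (p : Ring K n).

Definition vexp a : 'X_{1..N} := U_(enum_rank a)%MM.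

Lemma vexpE a k : vexp a k = (a == enum_val k).
Proof.
rewrite mnm1E; congr nat_of_bool.
by apply/eqP/eqP => [<-|->]; rewrite ?enum_rankK ?enum_valK.
Qed.

Lemma vexp_inj : injective vexp.
Proof.
by move=> a b /mnmP/(_ (enum_rank a)); rewrite !vexpE enum_rankK eqxx; case: eqVneq.
Qed.

Lemma vexpD_inj a b c d : (vexp a + vexp b = vexp c + vexp d)%MM ->
  (a = c /\ b = d) \/ (a = d /\ b = c).
Proof.
move=> e; move/mnmP/(_ (enum_rank a)): (e); rewrite !mnmDE !vexpE enum_rankK eqxx.
case: (eqVneq c a) => [ca|_].
  by left; split => //; apply/vexp_inj/(@addmI _ (vexp a)); rewrite e ca.
case: (eqVneq d a) => [da|_] //; right; split => //.
by apply/vexp_inj/(@addmI _ (vexp a)); rewrite e da addmC.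
Qed.

Lemma mdeg_vexpD a b : mdeg (vexp a + vexp b)%MM = 2%N.
Proof. by rewrite mdegD !mdeg1. Qed.

Definition binom a b c d : Ring K n := xv K a * xv K b - xv K c * xv K d.

Lemma binomE a b c d : binom a b c d = 'X_[vexp a + vexp b] - 'X_[vexp c + vexp d].
Proof. by rewrite /binom !mpolyXD. Qed.

Lemma is_lead_uniq p m1 m2 : is_lead p m1 -> is_lead p m2 -> m1 = m2.
Proof.
move=> [p1 lead1] [p2 lead2]; apply/eqP; apply: contraT => neq.
by case: (grevlex_asym (lead1 _ p2 _) (lead2 _ p1 neq)); rewrite eq_sym.
Qed.

Lemma is_lead_neq0 p m : is_lead p m -> p != 0.
Proof. by case=> pm _; apply: contraTneq pm => ->; rewrite msupp0. Qed.

Lemma is_lead_exists p : p != 0 -> exists m, is_lead p m.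
Proof.
move=> p_neq0; have : msupp p != [::].
  by apply: contra p_neq0 => /eqP supp0; rewrite [p]mpolyE supp0 big_nil.
by case/(seq_max_exists (@grevlex_trans n) (@grevlex_total n)) => m; exists m.
Qed.

Lemma binom_lead a b c d : var_lt a d -> var_lt b d -> var_lt c d ->
  [/\ is_lead (binom a b c d) (vexp a + vexp b)%MM,
      (binom a b c d)@_(vexp a + vexp b) = 1 &
      {subset msupp (binom a b c d) <= [:: vexp a + vexp b; vexp c + vexp d]%MM}].
Proof.
move=> ad bd cd.
have vexp_below x l : var_lt x d -> var_lt d (enum_val l) -> vexp x l = 0%N.
  by move=> xd dl; rewrite vexpE; case: eqP dl => // <- /(var_lt_asym xd).
have vexp_d x : var_lt x d -> vexp x (enum_rank d) = 0%N.
  by move=> xd; rewrite vexpE enum_rankK; case: eqP xd => // ->; rewrite var_lt_irr.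
have lt_cd_ab : grevlex_lt (vexp c + vexp d) (vexp a + vexp b).
  apply/grevlexP; right; rewrite !mdeg_vexpD; split => //; exists (enum_rank d).
  rewrite !mnmDE (vexp_d a) // (vexp_d b) // (vexp_d c) // vexpE enum_rankK eqxx.
  split => // l dl; rewrite !mnmDE (vexp_below a) // (vexp_below b) // (vexp_below c) // vexpE.
  by case: eqP dl => // ->; rewrite var_lt_irr.
have neq : (vexp a + vexp b != vexp c + vexp d)%MM.
  by apply: contraTneq lt_cd_ab => ->; apply/negP => lt; case: (grevlex_asym lt lt).
have coef1 : (binom a b c d)@_(vexp a + vexp b) = 1.
  by rewrite binomE mcoeffB !mcoeffX eqxx eq_sym (negbTE neq) subr0.
have supp : {subset msupp (binom a b c d) <= [:: vexp a + vexp b; vexp c + vexp d]%MM}.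
  move=> m; rewrite mcoeff_msupp binomE mcoeffB !mcoeffX.
  case: (eqVneq (vexp a + vexp b)%MM m) => [<-|_]; first by rewrite mem_head.
  case: (eqVneq (vexp c + vexp d)%MM m) => [<-|_]; first by rewrite !inE eqxx orbT.
  by rewrite subrr eqxx.
split=> //; split; first by rewrite mcoeff_msupp coef1 oner_neq0.
by move=> m /supp; rewrite !inE => /orP [/eqP->|/eqP->]; rewrite ?eqxx.
Qed.
End Binomials.

Section PhiImages.
Variables (K : fieldType) (n : nat).
Local Notation N := (nvar n).
Implicit Types (a b : Idx n) (i j : 'I_n) (u v : 'X_{1..N}) (p : Ring K n).

Definition phi_exp a : 'X_{1..n + n} :=
  (U_(lshift n a.1) + \sum_(j in a.2) U_(rshift n j))%MM.

Lemma phi_imgE a : phi_img K a = 'X_[phi_exp a].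
Proof.
by rewrite /phi_img mpolyXD (big_morph _ (@mpolyXD _ K) (@mpolyX0 _ K)).
Qed.

Lemma phi'_xv a : phi' (xv K a) = 'X_[phi_exp a].
Proof. by rewrite /phi' comp_mpolyXU -tnth_nth tnth_mktuple enum_rankK phi_imgE. Qed.

Lemma phi_expL a i : phi_exp a (lshift n i) = (a.1 == i).
Proof.
rewrite mnmDE mnm1E mnm_sumE big1 ?addn0; first by rewrite eq_shift.
by move=> j _; rewrite mnm1E eq_shift.
Qed.

Lemma phi_expR a j : phi_exp a (rshift n j) = (j \in a.2).
Proof.
rewrite mnmDE mnm1E eq_shift add0n mnm_sumE.
case: (boolP (j \in a.2)) => ja.
  rewrite (bigD1 j) //= mnm1E eqxx big1 // => k /andP [_ kj].
  by rewrite mnm1E eq_shift (negbTE kj).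
by rewrite big1 // => k ka; rewrite mnm1E eq_shift; case: eqP ja => // <-; rewrite ka.
Qed.

Definition phi_mnm u : 'X_{1..n + n} :=
  (\sum_(k < N) phi_exp (enum_val k) *+ u k)%MM.

Lemma phi'E p : phi' p = \sum_(u <- msupp p) p@_u *: 'X_[phi_mnm u].
Proof.
rewrite /phi' comp_mpolyE; apply: eq_bigr => u _; congr (_ *: _).
by rewrite -mprodXnE; apply: eq_bigr => k _; rewrite tnth_mktuple phi_imgE.
Qed.

Lemma phi_mnmD u v : phi_mnm (u + v)%MM = (phi_mnm u + phi_mnm v)%MM.
Proof.
apply/mnmP => x; rewrite mnmDE !mnm_sumE -big_split; apply: eq_bigr => k _.
by rewrite !mulmnE mnmDE mulnDr.
Qed.

Definition deg_y u i := phi_mnm u (lshift n i).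
Definition deg_beta u j := phi_mnm u (rshift n j).

Lemma deg_y_gt0P u i :
  reflect (exists2 a : Idx n, a.1 = i & 0 < u (enum_rank a))%N (0 < deg_y u i)%N.
Proof.
rewrite /deg_y /phi_mnm mnm_sumE; under eq_bigr do rewrite mulmnE phi_expL.
apply: (iffP (sum_mask_gt0P _ _)) => [[k /andP [/eqP ki uk]]|[a ai ua]].
  by exists (enum_val k); rewrite ?enum_valK.
by exists (enum_rank a); rewrite enum_rankK ai eqxx.
Qed.

Lemma deg_beta_gt0P u j :
  reflect (exists2 a : Idx n, j \in a.2 & 0 < u (enum_rank a))%N (0 < deg_beta u j)%N.
Proof.
rewrite /deg_beta /phi_mnm mnm_sumE; under eq_bigr do rewrite mulmnE phi_expR.
apply: (iffP (sum_mask_gt0P _ _)) => [[k /andP [ja uk]]|[a ja ua]].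
  by exists (enum_val k); rewrite ?enum_valK.
by exists (enum_rank a); rewrite enum_rankK ja.
Qed.

Lemma mdeg_deg_y u : mdeg u = (\sum_(i < n) deg_y u i)%N.
Proof.
rewrite mdegE /deg_y /phi_mnm.
under [RHS]eq_bigr do rewrite mnm_sumE.
rewrite exchange_big /=; apply: eq_bigr => k _.
under eq_bigr do rewrite mulmnE phi_expL.
rewrite -big_distrl /= (bigD1 (enum_val k).1) //= eqxx big1 ?addn0 ?mul1n //.
by move=> i; rewrite eq_sym => /negbTE ->.
Qed.

End PhiImages.

Section Straightening.
Variables (K : fieldType) (n : nat).
Implicit Types (a b c d : Idx n) (i j : 'I_n) (A B : {set 'I_n}).

Definition compat a b : bool :=
  ((a.1 < b.1)%N ==> (a.2 :\ b.1 \subset b.2)) &&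
  ((a.1 == b.1) ==> (a.2 \subset b.2) || (b.2 \subset a.2)).

(* [x_a x_b] is standard: it is not the leading term of an element of [T]. *)
Definition std_pair a b := compat a b && compat b a.

Lemma std_pairC a b : std_pair a b = std_pair b a.
Proof. by rewrite /std_pair andbC. Qed.

Lemma std_pair_refl a : std_pair a a.
Proof. by rewrite /std_pair /compat ltnn eqxx subxx. Qed.

Lemma meetLC a b : meetL a b = meetL b a.
Proof.
by rewrite /meetL /Defs.ord_min setIC; case: ltngtP => [||/val_inj ->].
Qed.

Lemma joinLC a b : joinL a b = joinL b a.
Proof.
by rewrite /joinL /Defs.ord_max setUC; case: ltngtP => [||/val_inj ->].
Qed.

Lemma GL_binomC a b : GL_binom K a b = GL_binom K b a.
Proof. by rewrite /GL_binom meetLC joinLC mulrC. Qed.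

Lemma phi_exp_meet_join a b :
  (phi_exp a + phi_exp b = phi_exp (meetL a b) + phi_exp (joinL a b))%MM.
Proof.
apply: eq_mnm_shift => [i|j]; rewrite [LHS]mnmDE [RHS]mnmDE ?phi_expL ?phi_expR.
  by rewrite /= /Defs.ord_min /Defs.ord_max; case: leqP => _ //; apply: addnC.
by rewrite !inE; case: (j \in a.2); case: (j \in b.2).
Qed.

Definition valid4 a b c d :=
  [&& valid_idx a, valid_idx b, valid_idx c & valid_idx d].

Definition straightening a b c d : Prop :=
  [/\ [/\ var_lt a d, var_lt b d & var_lt c d],
      ~~ std_pair a b, std_pair c d &
      (phi_exp a + phi_exp b = phi_exp c + phi_exp d)%MM].

Lemma straighteningC a b c d : straightening a b c d -> straightening b a c d.
Proof. by case=> [[ad bd cd]] nab cd_std e; split; rewrite // 1?std_pairC // addmC. Qed.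

Lemma GL_straightening a b : incomparable a b ->
  valid4 a b (meetL a b) (joinL a b) -> straightening a b (meetL a b) (joinL a b).
Proof.
wlog le_ab : a b / (a.1 <= b.1)%N.
  move=> W incab v4; case: (leqP a.1 b.1) => [le_ab|/ltnW le_ba]; first exact: W.
  apply: straighteningC; rewrite meetLC joinLC; apply: W => //.
    by rewrite /incomparable andbC.
  by move: v4; rewrite /valid4 meetLC joinLC => /and4P [-> -> -> ->].
move=> incab v4; move: (phi_exp_meet_join a b) le_ab incab v4.
case: a b => [i A] [j B] e /= le_ij; rewrite /incomparable /leL /= le_ij /=.
case/andP=> nsAB nji; rewrite /valid4 /valid_idx.
rewrite /meetL /joinL /Defs.ord_min /Defs.ord_max le_ij /= in e *.
case/and4P=> iA jB _; rewrite !inE negb_or => /andP [jA _].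
have ltB := proper_card (properUr nsAB).
have sIU : A :&: B \subset A :|: B := subset_trans (subsetIl A B) (subsetUl A B).
case: (ltngtP i j) le_ij nji e => [lt_ij|//|/val_inj <-] _ nji e.
- have nsAjB : ~~ (A :\ j \subset B).
    apply: contra nsAB => /subsetP sAB; apply/subsetP => x xA; apply: sAB.
    by rewrite !inE xA andbT; apply: contraNneq jA => <-.
  split=> //; first by split; apply/var_ltP; [constructor 1|constructor 2|constructor 1].
    by rewrite /std_pair /compat /= lt_ij (negbTE nsAjB).
  rewrite /std_pair /compat /= lt_ij ltnNge (ltnW lt_ij) sIU orbT !implybT /= !andbT.
  by apply/subsetP => x; rewrite !inE => /andP [_ /andP [-> _]].
- have nsBA : ~~ (B \subset A) by move: nji; rewrite ?leqnn.
  have ltA := proper_card (properUl nsBA).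
  have ltAB : (#|A :&: B| < #|A :|: B|)%N.
    exact: leq_ltn_trans (subset_leq_card (subsetIl A B)) ltA.
  split=> //; first by split; apply/var_ltP; constructor 2.
    by rewrite /std_pair /compat /= ltnn eqxx /= (negbTE nsAB) (negbTE nsBA).
  by rewrite /std_pair /compat /= ltnn eqxx sIU orbT.
Qed.

Definition T2_binom a b : Ring K n :=
  binom K a b (a.1, (a.2 :&: b.2) :|: [set b.1]) (b.1, (a.2 :\ b.1) :|: b.2).

Lemma T2_binom_neq0 i j A B : j \in A -> j \notin B ->
  T2_binom (i, A) (j, B) != 0 -> ~~ (A :\ j \subset B).
Proof.
move=> jA jB; apply: contra => sAjB; apply/eqP; rewrite /T2_binom /binom /=.
have -> : (A :&: B) :|: [set j] = A.
  apply/setP => x; rewrite !inE; case: (eqVneq x j) => [->|xj] /=; first by rewrite jA orbT.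
  by rewrite orbF andb_idr // => xA; apply: (subsetP sAjB); rewrite !inE xj.
by rewrite (setUidPr sAjB) subrr.
Qed.

Lemma T2_straightening i j A B : (i < j)%N -> i \notin A -> j \notin B -> j \in A ->
  ~~ (A :\ j \subset B) ->
  let c := (i, (A :&: B) :|: [set j]) in let d := (j, (A :\ j) :|: B) in
  valid4 (i, A) (j, B) c d /\ straightening (i, A) (j, B) c d.
Proof.
move=> lt_ij iA jB jA nsAjB c d; have neq_ij : i != j by rewrite neq_ltn lt_ij.
split.
  rewrite /valid4 /valid_idx /= iA jB !inE negb_or eqxx jB !andbT /=.
  by rewrite neq_ij negb_and iA.
split.
- split; apply/var_ltP; [by constructor 1|constructor 2|by constructor 1].
  by split => //; apply: proper_card (properUr nsAjB).
- by rewrite /std_pair /compat /= lt_ij (negbTE nsAjB).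
- rewrite /std_pair /compat /= lt_ij ltnNge (ltnW lt_ij) (negbTE neq_ij) eq_sym.
  rewrite (negbTE neq_ij) /= !andbT.
  apply/subsetP => x; rewrite !inE => /andP [xj /orP [/andP [_ ->]|/eqP xj']].
    by rewrite orbT.
  by rewrite xj' eqxx in xj.
- apply: eq_mnm_shift => x; rewrite [LHS]mnmDE [RHS]mnmDE ?phi_expL ?phi_expR //=.
  rewrite !inE; case: (eqVneq x j) => [->|_] /=; first by rewrite jA (negbTE jB).
  by case: (x \in A); case: (x \in B).
Qed.

(* For a non-standard pair, the element of [T] with leading term [x_a x_b]. *)
Definition straighten a b : Ring K n :=
  if (a.1 < b.1)%N && (b.1 \in a.2) then T2_binom a b
  else if (b.1 < a.1)%N && (a.1 \in b.2) then T2_binom b a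
  else GL_binom K a b.

Lemma straightenC a b : straighten a b = straighten b a.
Proof. by rewrite /straighten GL_binomC; case: ltngtP. Qed.

Lemma straighten_GL a b : valid_idx (joinL a b) -> straighten a b = GL_binom K a b.
Proof.
rewrite /straighten /valid_idx /joinL /Defs.ord_max /=.
case: ltngtP => //= _; rewrite inE negb_or => /andP [/negbTE eA /negbTE eB].
  by rewrite eA.
by rewrite eB.
Qed.

Lemma T_straightening g : T g -> exists a b c d,
  [/\ g = binom K a b c d, g = straighten a b, valid4 a b c d & straightening a b c d].
Proof.
case=> [[[a [b [incab v4 ->]]]|[i [j [A [B [/and4P [lt_ij iA jB jA] _ ->]]]]]] g_neq0].
  exists a, b, (meetL a b), (joinL a b); split => //; last exact: GL_straightening.
  by rewrite straighten_GL //; case/and4P: v4.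
have [v4 str] := T2_straightening lt_ij iA jB jA (T2_binom_neq0 jA jB g_neq0).
exists (i, A), (j, B), (i, (A :&: B) :|: [set j]), (j, (A :\ j) :|: B).
by split => //; rewrite /straighten /= lt_ij jA.
Qed.
End Straightening.

Section ElementsOfT.
Variables (K : fieldType) (n : nat).
Implicit Types (a b c d : Idx n) (g : Ring K n).

Lemma straightening_I_phi a b c d :
  valid4 a b c d -> straightening a b c d -> I_phi (binom K a b c d).
Proof.
case/and4P=> va vb vc vd [[ad bd cd] _ _ e]; split.
  have [_ _ supp] := binom_lead K ad bd cd.
  move=> m /supp; rewrite !inE => mE k nk.
  have vexp0 x : valid_idx x -> vexp x k = 0%N.
    by move=> vx; rewrite vexpE; case: eqP nk => // <-; rewrite vx.
  by case/orP: mE => /eqP ->; rewrite mnmDE !vexp0.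
rewrite /I_phi' /phi' /binom rmorphB !rmorphM /=.
by rewrite -![comp_mpoly _ (xv K _)]/(phi' (xv K _)) !phi'_xv -!mpolyXD e subrr.
Qed.

Lemma T_I_phi g : T g -> I_phi g.
Proof.
by case/T_straightening=> [a [b [c [d [-> _ v4 str]]]]]; apply: straightening_I_phi.
Qed.

Lemma T_monic g : T g -> exists m, is_lead g m /\ g@_m = 1.
Proof.
case/T_straightening=> [a [b [c [d [-> _ _ [[ad bd cd] _ _ _]]]]]].
by have [lead coef1 _] := binom_lead K ad bd cd; exists (vexp a + vexp b)%MM.
Qed.

Lemma T_eq_straighten g a b :
  T g -> is_lead g (vexp a + vexp b)%MM -> g = straighten K a b.
Proof.
case/T_straightening=> [a' [b' [c [d [gE gS _ [[ad bd cd] _ _ _]]]]]] lead.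
have [lead' _ _] := binom_lead K ad bd cd; rewrite -gE in lead'.
rewrite gS; case: (vexpD_inj (is_lead_uniq lead' lead)) => [[-> ->]|[-> ->]] //.
exact: straightenC.
Qed.

Lemma T_reduced g g' : T g -> T g' -> g' <> g ->
  forall m m', m \in msupp g -> is_lead g' m' -> ~ (m' <= m)%MM.
Proof.
move=> Tg Tg' neq m m' gm lead' le_m'm.
have [a [b [c [d [gE _ _ [[ad bd cd] _ std_cd _]]]]]] := T_straightening Tg.
have [a' [b' [c' [d' [g'E _ _ [[ad' bd' cd'] nstd' _ _]]]]]] := T_straightening Tg'.
have [lead _ supp] := binom_lead K ad bd cd.
have [lead'' _ _] := binom_lead K ad' bd' cd'; rewrite -g'E in lead''.
rewrite -(is_lead_uniq lead'' lead') in le_m'm.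
have /lepm_mdeg_eq e' := le_m'm; move: gm; rewrite gE => /supp.
rewrite !inE => /orP [] /eqP em; rewrite em !mdeg_vexpD in e'; move: (e' erefl) => {}e'.
  apply: neq; rewrite -gE -e' in lead.
  by rewrite (T_eq_straighten Tg lead) (T_eq_straighten Tg' lead'').
by case: (vexpD_inj e') nstd' => [[-> ->]|[-> ->]]; rewrite ?std_cd // std_pairC std_cd.
Qed.

Lemma GL_binom_in_T a b : incomparable a b -> valid4 a b (meetL a b) (joinL a b) ->
  T (GL_binom K a b) /\ is_lead (GL_binom K a b) (vexp a + vexp b)%MM.
Proof.
move=> incab v4; have [[ad bd cd] _ _ _] := GL_straightening incab v4.
have [lead _ _] := binom_lead K ad bd cd.
by split=> //; split; [left; exists a, b | exact: is_lead_neq0 lead].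
Qed.

Lemma nonstd_pair_in_T a b : valid_idx a -> valid_idx b -> ~~ std_pair a b ->
  T (straighten K a b) /\ is_lead (straighten K a b) (vexp a + vexp b)%MM.
Proof.
wlog le_ab : a b / (a.1 <= b.1)%N.
  move=> W va vb nstd; case: (leqP a.1 b.1) => [le_ab|/ltnW le_ba]; first exact: W.
  by rewrite straightenC addmC; apply: W; rewrite // std_pairC.
case: a b le_ab => [i A] [j B] /= le_ij; rewrite /valid_idx /= => iA jB.
rewrite /std_pair /compat /straighten /=.
case: (ltngtP i j) le_ij jB => [lt_ij|//|/val_inj <-] _ jB /=; last first.
  rewrite eqxx /= [(B \subset A) || _]orbC andbb negb_or => nsAB.
  apply: GL_binom_in_T; first by rewrite /incomparable /leL /= leqnn.
  by rewrite /valid4 /valid_idx /meetL /joinL /Defs.ord_min /Defs.ord_max /= leqnn !inE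
    negb_and negb_or iA jB.
have neq_ij : i != j by rewrite neq_ltn lt_ij.
rewrite (negbTE neq_ij) eq_sym (negbTE neq_ij) /= !andbT => nsAjB.
have nsAB : ~~ (A \subset B) by apply: contra nsAjB; apply: subset_trans (subD1set A j).
case: ifPn => [jA|jNA].
  have [v4 str] := T2_straightening lt_ij iA jB jA nsAjB.
  have [[ad bd cd] _ _ _] := str; have [lead _ _] := binom_lead K ad bd cd.
  split=> //; split; last exact: is_lead_neq0 lead.
  right; exists i, j, A, B; split => //; first by rewrite lt_ij iA jB jA.
  by rewrite /incomparable /leL /= (ltnW lt_ij) (negbTE nsAB) leqNgt lt_ij.
apply: GL_binom_in_T.
  by rewrite /incomparable /leL /= (ltnW lt_ij) (negbTE nsAB) leqNgt lt_ij.
by rewrite /valid4 /valid_idx /meetL /joinL /Defs.ord_min /Defs.ord_max /= (ltnW lt_ij) !inE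
  negb_and negb_or iA jB jNA.
Qed.
End ElementsOfT.

Section StandardMonomials.
Variable n : nat.
Local Notation N := (nvar n).
Implicit Types (a b x : Idx n) (i : 'I_n) (m u w : 'X_{1..N}).

Definition valid_mnm m := forall k : 'I_N, ~~ valid_idx (enum_val k) -> m k = 0%N.

Definition std_mnm m : bool := [forall a : Idx n, forall b : Idx n,
  (0 < m (enum_rank a))%N && (0 < m (enum_rank b))%N ==> std_pair a b].

Lemma std_mnmP m : reflect
  (forall a b, 0 < m (enum_rank a) -> 0 < m (enum_rank b) -> std_pair a b)%N
  (std_mnm m).
Proof.
apply: (iffP forallP) => [std a b ma mb|std a]; last first.
  by apply/forallP => b; apply/implyP => /andP [ma mb]; apply: std.
by move/forallP/(_ b)/implyP: (std a); apply; rewrite ma.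
Qed.

Lemma valid_mnm_gt0 m a : valid_mnm m -> (0 < m (enum_rank a))%N -> valid_idx a.
Proof. by move=> vm; apply: contraTT => va; rewrite vm ?enum_rankK. Qed.

Lemma valid_mnm_le m' m : (m' <= m)%MM -> valid_mnm m -> valid_mnm m'.
Proof. by move=> /mnm_lepP le vm k /vm mk0; apply/eqP; rewrite -leqn0 -mk0 le. Qed.

Lemma std_mnm_le m' m : (m' <= m)%MM -> std_mnm m -> std_mnm m'.
Proof.
move=> /mnm_lepP le /std_mnmP std; apply/std_mnmP => a b ma mb.
by apply: std; apply: leq_trans (le _).
Qed.

Lemma fiber_mdeg m u : phi_mnm m = phi_mnm u -> mdeg m = mdeg u.
Proof. by move=> e; rewrite !mdeg_deg_y /deg_y e. Qed.

Lemma exists_top_y m : m != 0%MM ->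
  exists2 i, (0 < deg_y m i)%N & forall i', (0 < deg_y m i')%N -> (i' <= i)%N.
Proof.
move=> m_neq0; have [k mk] : exists k, (0 < m k)%N.
  apply/existsP; apply: contraR m_neq0; rewrite negb_exists => /forallP mk0.
  by apply/eqP/mnmP => k; rewrite mnm0E; apply/eqP; rewrite -leqn0 leqNgt mk0.
have y0 : (0 < deg_y m (enum_val k).1)%N.
  by apply/deg_y_gt0P; exists (enum_val k); rewrite ?enum_valK.
by case: (@arg_maxnP _ _ (fun i => 0 < deg_y m i)%N (fun i : 'I_n => i : nat) y0) => i;
  exists i.
Qed.

(* When [i] bounds the [y]-support of [phi m], the largest variable that can
   occur in a monomial of the [phi]-fiber of [m]. *)
Definition top_var m i : Idx n := (i, [set j | 0 < deg_beta m j]%N :\ i).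

Lemma mnm_above_top_var w i l : valid_mnm w ->
  (forall i', (0 < deg_y w i')%N -> (i' <= i)%N) ->
  var_lt (top_var w i) (enum_val l) -> w l = 0%N.
Proof.
move=> vw ymax tl; apply/eqP; rewrite -leqn0 leqNgt; apply/negP => wl.
have {wl} : (0 < w (enum_rank (enum_val l)))%N by rewrite enum_valK.
case: (enum_val l) tl => [i' X] tl wx; have vx := valid_mnm_gt0 vw wx.
have /ymax : (0 < deg_y w i')%N by apply/deg_y_gt0P; exists (i', X).
rewrite leq_eqVlt => /orP [/eqP/val_inj eqi|lt_i'i]; last first.
  by apply: (var_lt_asym tl); apply/var_ltP; constructor 1.
have sXS : X \subset [set j | 0 < deg_beta w j]%N :\ i.
  apply/subsetP => j jX; rewrite !inE; apply/andP; split.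
    by apply: contraNneq vx => eji; rewrite /valid_idx /= eqi -eji jX.
  by apply/deg_beta_gt0P; exists (i', X).
case: (eqVneq X ([set j | 0 < deg_beta w j]%N :\ i)) => [eqX|neqX].
  by move: tl; rewrite /top_var eqi -eqX var_lt_irr.
apply: (var_lt_asym tl); apply/var_ltP; constructor 2; split => //.
by apply: proper_card; rewrite properEneq neqX sXS.
Qed.

Lemma top_var_std m i : valid_mnm m -> std_mnm m -> (0 < deg_y m i)%N ->
  (forall i', (0 < deg_y m i')%N -> (i' <= i)%N) ->
  (0 < m (enum_rank (top_var m i)))%N.
Proof.
move=> vm /std_mnmP std /deg_y_gt0P [a1 a1i ma1] ymax.
pose in_top_row a := (a.1 == i) && (0 < m (enum_rank a))%N.
have row_a1 : in_top_row a1 by rewrite /in_top_row a1i eqxx ma1.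
case: (arg_maxnP (fun a : Idx n => #|a.2|) row_a1) => -[i' X] /andP [/eqP /= ->] mX Xmax.
suff -> : top_var m i = (i, X) by [].
congr (_, _); apply/setP => j; rewrite !inE.
apply/andP/idP => [[ji /deg_beta_gt0P [b jb mb]]|jX].
  have /ymax le_bi : (0 < deg_y m b.1)%N by apply/deg_y_gt0P; exists b.
  have /andP [] := std _ _ mb mX; rewrite /compat /= => /andP [compat_lt compat_eq] _.
  case: (ltngtP b.1 i) le_bi compat_lt compat_eq => // [lt_bi|/val_inj ebi] _.
    by move=> /subsetP sbX _; apply: sbX; rewrite !inE ji jb.
  move=> _; rewrite ebi eqxx /= => /orP [/subsetP -> //|sXb].
  have /Xmax cardb : in_top_row b by rewrite /in_top_row ebi eqxx mb.
  by have /eqP -> : X == b.2 by rewrite eqEcard sXb.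
split; last by apply/deg_beta_gt0P; exists (i, X).
by apply: contraTneq (valid_mnm_gt0 vm mX) => <-; rewrite /valid_idx negbK.
Qed.

Lemma std_mnm_fiber_min m u : valid_mnm m -> valid_mnm u -> std_mnm m ->
  phi_mnm m = phi_mnm u -> m != u -> grevlex_lt m u.
Proof.
move: {2}(mdeg m) (erefl (mdeg m)) => d; elim: d m u => [|d IH] m u dm vm vu sm e neq.
  have /eqP m0 : m == 0%MM by rewrite -mdeg_eq0 dm.
  have /eqP u0 : u == 0%MM by rewrite -mdeg_eq0 -(fiber_mdeg e) dm.
  by rewrite m0 u0 eqxx in neq.
have [|i yi ymax] := @exists_top_y m; first by rewrite -mdeg_eq0 dm.
pose t := top_var m i; have mt := top_var_std vm sm yi ymax.
have ut_top : top_var u i = t by rewrite /t /top_var /deg_beta e.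
have ymax_u i' : (0 < deg_y u i')%N -> (i' <= i)%N by rewrite /deg_y -e; apply: ymax.
(* Either [u] lacks the variable [t] and loses there, or [t] cancels from both. *)
case: (posnP (u (enum_rank t))) => [ut0|ut].
  apply/grevlexP; right; split; first exact: fiber_mdeg.
  exists (enum_rank t); rewrite ut0; split => // l; rewrite enum_rankK => tl.
  rewrite (mnm_above_top_var vm ymax tl) (@mnm_above_top_var _ i) //.
  by rewrite ut_top.
have peel w : (0 < w (enum_rank t))%N -> w = (w - vexp t + vexp t)%MM.
  by move=> wt; rewrite submK // lep1mP -lt0n.
rewrite (peel m mt) (peel u ut); apply: grevlex_lt_add2r.
have le_m : (m - vexp t <= m)%MM by apply/mnm_lepP => k; rewrite mnmBE leq_subr.
have le_u : (u - vexp t <= u)%MM by apply/mnm_lepP => k; rewrite mnmBE leq_subr.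
apply: IH.
- by move: dm; rewrite {1}(peel m mt) mdegD mdeg1 addn1 => -[].
- exact: valid_mnm_le le_m vm.
- exact: valid_mnm_le le_u vu.
- exact: std_mnm_le le_m sm.
- by apply: (@addIm _ (phi_mnm (vexp t))); rewrite /= -!phi_mnmD -!peel.
- by apply: contra neq => /eqP e'; rewrite (peel m mt) (peel u ut) e'.
Qed.
End StandardMonomials.

Section GroebnerBasis.
Variables (K : fieldType) (n : nat).
Implicit Types (f : Ring K n) (m : 'X_{1..nvar n}).

(* The coefficient of [phi_mnm m] in [phi' f] is [f@_m]: by fiber-minimality,
   no other monomial of [f] below [m] has the same image. *)
Lemma std_lead_phi'_neq0 f m :
  in_subring f -> is_lead f m -> std_mnm m -> phi' f != 0.
Proof.
move=> vf [fm fmax] sm; apply/eqP => /(congr1 (mcoeff (phi_mnm m))).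
rewrite phi'E mcoeff0 raddf_sum (bigD1_seq m) ?msupp_uniq //= big1_seq.
  by rewrite mcoeffZ mcoeffX eqxx mulr1 addr0 => /eqP; rewrite mcoeff_eq0 fm.
move=> u /andP [neq fu]; rewrite mcoeffZ mcoeffX.
case: (eqVneq (phi_mnm u) (phi_mnm m)) => [e|_]; last by rewrite mulr0.
have lt_mu : grevlex_lt m u.
  by apply: std_mnm_fiber_min (vf _ fm) (vf _ fu) sm (esym e) _; rewrite eq_sym.
by case: (grevlex_asym lt_mu (fmax _ fu neq)).
Qed.

Lemma nonstd_mnm_divisor m : valid_mnm m -> ~~ std_mnm m -> exists a b,
  [/\ valid_idx a, valid_idx b, ~~ std_pair a b & (vexp a + vexp b <= m)%MM].
Proof.
move=> vm /forallPn [a /forallPn [b]].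
rewrite negb_imply => /andP [/andP [ma mb] nstd].
exists a, b; split => //; [exact: valid_mnm_gt0 vm ma | exact: valid_mnm_gt0 vm mb |].
have neq : a != b by apply: contraNneq nstd => ->; apply: std_pair_refl.
apply/mnm_lepP => k; rewrite mnmDE !vexpE.
case: (eqVneq a (enum_val k)) => [ea|_]; case: (eqVneq b (enum_val k)) => [eb|_] //=.
- by rewrite ea eb eqxx in neq.
- by move: ma; rewrite ea enum_valK.
- by move: mb; rewrite eb enum_valK.
Qed.

Lemma I_phi_lead_divisible f : I_phi f -> f != 0 -> exists g : Ring K n, [/\ T g, g != 0 &
  exists mg mf, [/\ is_lead g mg, is_lead f mf & (mg <= mf)%MM]].
Proof.
case=> vf kerf f_neq0; have [mf lead] := is_lead_exists f_neq0.
have nstd : ~~ std_mnm mf.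
  by apply/negP => /(std_lead_phi'_neq0 vf lead); rewrite kerf eqxx.
have [a [b [va vb nab le_ab]]] := nonstd_mnm_divisor (vf _ lead.1) nstd.
have [Tg lead_g] := nonstd_pair_in_T K va vb nab.
by exists (straighten K a b); split => //; [case: Tg | exists (vexp a + vexp b)%MM, mf].
Qed.

End GroebnerBasis.

Theorem theorem3p6 (K : fieldType) (n : nat) :
  @reduced_groebner_basis K n (@T K n) (@I_phi K n).
Proof.
split; [split|split].
- exact: T_I_phi.
- exact: I_phi_lead_divisible.
- by move=> g Tg; split; [case: Tg | exact: T_monic].
- exact: T_reduced.
Qed.
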